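(* Let $f=a_0+a_1 z+\cdots+a_mz^m\in \mathbb{Z}[z]$ be primitive (the greatest common divisor of its coefficients is $1$). Suppose there exist positive real numbers $\alpha<\beta$ and an index $j\in\{0,1,\ldots,m\}$ such that \[ |a_j| \alpha^j>\sum_{i=0,\, i\neq j}^m |a_i|\beta^i. \] Further, suppose there exist natural numbers $n$, $d$, $k$, $\ell\leq m$, and a prime $p$ with $p\nmid d$ such that $\beta-d\geq n\geq \alpha+d$, $f(n)=\pm p^k d$, $\gcd(k,\ell)=1$, $p^k$ divides $\frac{f^{(i)}(n)}{i!}$ for each $i=0, 1, \ldots,\ell-1$, and, in case $k>1$, also $p\nmid \frac{f^{(\ell)}(n)}{\ell!}$. Then $f$ is irreducible in $\mathbb{Z}[z]$.
   Context: $f^{(i)}$ denotes the $i$-th derivative of $f$ with respect to $z$. Natural numbers are positive integers. *)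

From HB Require Import structures.
From mathcomp Require Import all_boot all_order all_algebra.
From mathcomp Require Export reals.
Export Order.TTheory GRing.Theory Num.Theory.
Set Implicit Arguments. Unset Strict Implicit. Unset Printing Implicit Defensive.

Local Open Scope ring_scope.

Definition primitive_poly (f : {poly int}) : Prop :=
  (\big[gcdn/0%N]_(i < size f) absz (f`_i)%R)%N = 1%N.

Definition irreducible_Zpoly (f : {poly int}) : Prop :=
  [/\ f != 0, f \isn't a GRing.unit &
      forall g h : {poly int}, f = g * h ->
        g \is a GRing.unit \/ h \is a GRing.unit].

(* The dominant coefficient a_j keeps every complex root z of f out of the annulus
   alpha <= |z| <= beta, so |n - z| > d for all of them, and every nonconstant
   factor g of f has |g(n)| >= prod |n - z| > d. Constant factors are units since
   f is primitive; so a nontrivial factorization f = g h gives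
   |g(n)| |h(n)| = p^k d with both factors above d. As p does not divide d, p
   divides both, with valuations a, b >= 1 and a + b = k.
   The shifts G(X) = g(X + n), H(X) = h(X + n) satisfy
   G H = sum_i f^(i)(n)/i! X^i. Minimise the weight l v_p(G_i) + k i over the
   support of G at the least index i0, and likewise for H at j0: the coefficient
   of X^(i0+j0) in G H then has valuation exactly v_p(G_i0) + v_p(H_j0), and as
   p^k divides the coefficients below X^l, the two minimal weights w_G, w_H add
   up to at least k l. Since p does not divide the coefficient of X^l, some
   0 < s < l has p dividing neither G_s nor H_(l-s), so w_G <= min (l a, k s)
   and w_H <= min (l b, k (l - s)). Both pairs of bounds add up to k l, which
   forces l a = k s: l divides s, contradicting gcd(k, l) = 1. *)

From HB Require Import structures.
From mathcomp Require Import all_boot all_order all_algebra.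
From mathcomp Require Import reals.
From mathcomp Require Import zify.
From mathcomp.real_closed Require Import complex.
Import Order.TTheory GRing.Theory Num.Theory.
Local Open Scope ring_scope.

Lemma primitive_factor_unit (f g h : {poly int}) :
  primitive_poly f -> f = g * h -> (size g <= 1)%N -> g \is a GRing.unit.
Proof.
move=> prim_f fgh /size1_polyC g_const.
have coef_f i : f`_i = g`_0 * h`_i by rewrite fgh {1}g_const coefCM.
have g0_dvd1 : (absz (g`_0)%R %| 1)%N.
  by rewrite -prim_f; apply/dvdn_biggcdP => i _; rewrite coef_f abszM dvdn_mulr.
rewrite g_const poly_unitE size_polyC coefC /=.
by case: (g`_0) g0_dvd1 => [[|[|c]]|[|c]]; rewrite // ?unitr1 // NegzE unitrN1.
Qed.

Lemma irreducible_Zpoly_primitive (f : {poly int}) :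
  primitive_poly f -> (1 < size f)%N ->
  (forall g h, f = g * h -> (1 < size g)%N -> (1 < size h)%N -> False) ->
  irreducible_Zpoly f.
Proof.
move=> prim_f size_f no_split; split.
- by rewrite -size_poly_gt0 ltnW.
- by rewrite poly_unitE negb_and gtn_eqF.
move=> g h fgh; case: (leqP (size g) 1) => [sg|sg].
  by left; apply: primitive_factor_unit fgh sg.
case: (leqP (size h) 1) => [sh|sh]; last by case: (no_split g h).
by right; rewrite mulrC in fgh; apply: primitive_factor_unit fgh sh.
Qed.

Lemma root_outside_annulus (C : numDomainType) (F : {poly C}) (alpha beta : C) j z :
  0 <= alpha ->
  \sum_(i < size F | i != j :> nat) `|F`_i| * beta ^+ i <
    `|F`_j| * alpha ^+ j ->
  alpha <= `|z| <= beta -> ~~ root F z.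
Proof.
move=> alpha_ge0 dominant /andP[alpha_le beta_ge]; apply/negP => /rootP Fz0.
have beta_ge0 : 0 <= beta by apply: le_trans beta_ge.
have lt_j : (j < size F)%N.
  rewrite ltnNge; apply/negP => /(nth_default 0) Fj0; move: dominant.
  rewrite Fj0 normr0 mul0r le_gtF // sumr_ge0 // => i _.
  by rewrite mulr_ge0 ?exprn_ge0.
move: Fz0; rewrite horner_coef (bigD1 (Ordinal lt_j)) //= => /eqP.
rewrite addr_eq0 => /eqP Fjz.
have lower : `|F`_j| * alpha ^+ j <= `|F`_j * z ^+ j|.
  by rewrite normrM normrX ler_wpM2l //; apply: lerXn2r; rewrite ?nnegrE.
have upper :
    `|F`_j * z ^+ j| <= \sum_(i < size F | i != j :> nat) `|F`_i| * beta ^+ i.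
  rewrite Fjz normrN; apply: le_trans (ler_norm_sum _ _ _) _.
  rewrite (eq_bigl (fun i : 'I_(size F) => i != j :> nat)) => [|i]; last first.
    by congr negb; apply/eqP/eqP => [->|/val_inj].
  apply: ler_sum => i _; rewrite normrM normrX ler_wpM2l //.
  by apply: lerXn2r; rewrite ?nnegrE.
by have := lt_le_trans dominant (le_trans lower upper); rewrite ltxx.
Qed.

Lemma dist_gt_outside_annulus (C : numDomainType) (alpha beta : C) (n d : nat) z :
  0 <= alpha -> alpha + d%:R <= n%:R -> n%:R <= beta - d%:R ->
  ~~ (alpha <= `|z| <= beta) -> d%:R < `|n%:R - z|.
Proof.
move=> alpha_ge0 alpha_le beta_ge.
have beta_ge0 : 0 <= beta.
  by apply: le_trans (_ : 0 <= n%:R + d%:R) _; rewrite ?addr_ge0 // -lerBrDr.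
rewrite negb_and -!real_ltNge ?normr_real ?ger0_real // => /orP[z_lt|z_gt].
- apply: lt_le_trans (lerB_dist _ _); rewrite normr_nat ltrBrDr.
  by apply: lt_le_trans alpha_le; rewrite addrC ltrD2r.
- rewrite distrC; apply: lt_le_trans (lerB_dist _ _); rewrite normr_nat ltrBrDr.
  by apply: le_lt_trans z_gt; rewrite addrC -lerBrDr.
Qed.

Lemma int_poly_horner_gt (C : numClosedFieldType) (g : {poly int}) x (d : nat) :
  (1 < size g)%N ->
  (forall z : C, root (map_poly intr g) z -> d%:R < `|x%:~R - z|) ->
  (d < `|g.[x]|)%N.
Proof.
move=> size_g far_roots; pose gC := map_poly (intr : int -> C) g.
have [rs gC_eq] := closed_field_poly_normal gC.
have size_gC : size gC = size g by rewrite size_map_inj_poly //; exact: intr_inj.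
have lc_gC : lead_coef gC = (lead_coef g)%:~R.
  by rewrite lead_coef_map_inj //; exact: intr_inj.
have g_nz : g != 0 by rewrite -size_poly_gt0 (ltn_trans _ size_g).
have lc_nz : lead_coef gC != 0 by rewrite lc_gC intr_eq0 lead_coef_eq0.
have lc_ge1 : 1 <= `|lead_coef gC|.
  by rewrite lc_gC -intr_norm ler1z -abszE lez_nat absz_gt0 lead_coef_eq0.
have rs_neq0 : rs != [::].
  apply: contraTneq size_g => rs0; rewrite -size_gC gC_eq rs0 big_nil alg_polyC.
  by rewrite size_polyC leqNgt ltnS leq_b1.
have d_le : (d <= d ^ size rs)%N.
  case: d {far_roots} => // d.
  by rewrite -{1}(expn1 d.+1) leq_pexp2l // lt0n size_eq0.
suff : d%:R < `|gC.[x%:~R]| by rewrite horner_map /= -intr_norm -abszE ltr_nat.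
rewrite gC_eq hornerZ horner_prod normrM normr_prod.
apply: (lt_le_trans _ (ler_peMl _ lc_ge1)); last by apply: prodr_ge0.
apply: (le_lt_trans (_ : d%:R <= (d ^ size rs)%:R)); first by rewrite ler_nat.
rewrite natrX -[X in X < _]iter_mulr_1 -count_predT -big_const_seq !big_seq.
apply: ltr_prod => [|z z_in].
  by apply/hasP; exists rs`_0; rewrite mem_nth // lt0n size_eq0.
by rewrite ler0n hornerXsubC far_roots // -/gC gC_eq rootZ // root_prod_XsubC.
Qed.

Section ComplexRoots.
Local Open Scope complex_scope.

Lemma factor_horner_gt (R : rcfType) (f g h : {poly int}) (alpha beta : R) j n d :
  0 <= alpha ->
  \sum_(i < size f | i != j :> nat) `|f`_i|%:~R * beta ^+ i <
    `|f`_j|%:~R * alpha ^+ j ->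
  alpha + d%:R <= n%:R -> n%:R <= beta - d%:R ->
  f = g * h -> (1 < size g)%N -> (d < `|g.[n%:Z]|)%N.
Proof.
move=> alpha_ge0 dominant alpha_le beta_ge fgh size_g.
apply: (int_poly_horner_gt (R[i])) => // z gz.
pose fC := map_poly (intr : int -> R[i]) f.
have fz : root fC z by rewrite /fC fgh rmorphM rootM gz.
have size_fC : size fC = size f by rewrite size_map_inj_poly //; exact: intr_inj.
have norm_coef i (b : R) : `|fC`_i| * b%:C ^+ i = (`|f`_i|%:~R * b ^+ i)%:C.
  by rewrite coef_map /= -intr_norm rmorphM rmorphXn rmorph_int.
have C_nat m : (m%:R : R)%:C = m%:R by rewrite rmorph_nat.
have alphaC_ge0 : 0 <= alpha%:C by rewrite -(rmorph0 (real_complex R)) lecR.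
apply: (@dist_gt_outside_annulus _ alpha%:C beta%:C) => //.
- by rewrite -!C_nat -rmorphD lecR.
- by rewrite -!C_nat -rmorphB lecR.
apply: contraL fz; apply: (@root_outside_annulus _ _ _ _ j) => //.
rewrite size_fC; under eq_bigr do rewrite norm_coef.
by rewrite norm_coef -rmorph_sum ltcR.
Qed.

End ComplexRoots.

Lemma logn_split_above_cofactor {p k d a b : nat} :
  prime p -> ~~ (p %| d)%N -> (a * b = p ^ k * d)%N -> (d < a)%N -> (d < b)%N ->
  [/\ (0 < logn p a)%N, (0 < logn p b)%N & (logn p a + logn p b = k)%N].
Proof.
move=> p_pr p_nd ab_eq d_lt_a d_lt_b.
have d_gt0 : (0 < d)%N by apply: contraNT p_nd; rewrite lt0n negbK => /eqP ->.
have logn_gt0_of x y : (x * y = p ^ k * d)%N -> (d < x)%N -> (0 < logn p x)%N.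
  move=> xy_eq d_lt_x; rewrite logn_gt0 mem_primes p_pr (leq_ltn_trans _ d_lt_x) //=.
  apply: contraLR d_lt_x => p_ndx; rewrite -leqNgt; apply: (dvdn_leq d_gt0).
  have x_cop : coprime x (p ^ k) by rewrite coprimeXr // coprime_sym prime_coprime.
  by rewrite -(Gauss_dvdr _ x_cop) -xy_eq dvdn_mulr.
split; [exact: logn_gt0_of ab_eq d_lt_a | by apply: (logn_gt0_of b a) => //; rewrite mulnC |].
rewrite -lognM ?(leq_ltn_trans _ d_lt_a) ?(leq_ltn_trans _ d_lt_b) // ab_eq.
rewrite lognM ?expn_gt0 ?(prime_gt0 p_pr) // pfactorK //.
by rewrite logn_coprime ?addn0 // prime_coprime.
Qed.

Lemma coef_comp_XaddC (R : comNzRingType) (g : {poly R}) (c : R) i :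
  (g \Po ('X + c%:P))`_i = g^`N(i).[c].
Proof.
rewrite /comp_poly addrC (@nderiv_taylor_wide _ (size g + i.+1)); last 2 first.
- exact: commr_polyX.
- by rewrite size_map_polyC leq_addr.
rewrite coef_sum (bigD1 (Ordinal (leq_addl (size g) i.+1))) //= big1 => [|x ne_xi].
  by rewrite addr0 nderivn_map horner_map /= coefCM coefXn eqxx mulr1.
rewrite nderivn_map horner_map /= coefCM coefXn eq_sym.
by rewrite (_ : (x == i :> nat) = false) ?mulr0 //; apply/negbTE.
Qed.

Definition least_argmin {R : nzSemiRingType} (w : nat -> nat) (F : {poly R}) i0 :=
  [/\ F`_i0 != 0, forall i, F`_i != 0 -> (w i0 <= w i)%N
    & forall i, (i < i0)%N -> F`_i != 0 -> (w i0 < w i)%N].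

Lemma least_argminP {R : nzSemiRingType} (w : nat -> nat) {F : {poly R}} :
  F != 0 -> exists i0, least_argmin w F i0.
Proof.
move=> F_neq0.
have in_support i : F`_i != 0 -> (i < size F)%N.
  by rewrite ltnNge; apply: contra => /(nth_default 0) ->.
pose attained N := [exists i : 'I_(size F), (F`_i != 0) && (w i == N)].
have attained_at i : F`_i != 0 -> attained (w i).
  by move=> nz; apply/existsP; exists (Ordinal (in_support i nz)); rewrite /= nz eqxx.
have lead_nz : F`_(size F).-1 != 0 by rewrite -lead_coefE lead_coef_eq0.
have attained_some : exists N, attained N by exists (w (size F).-1); apply: attained_at.
have [mu /existsP[i1 /andP[nz1 /eqP w1]] mu_min] := ex_minnP attained_some.
have w_ge_mu i : F`_i != 0 -> (mu <= w i)%N by move=> nz; exact/mu_min/attained_at.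
have attains_mu : exists i, (F`_i != 0) && (w i == mu) by exists i1; rewrite nz1 w1 eqxx.
have [i0 /andP[nz0 /eqP w0] i0_min] := ex_minnP attains_mu.
exists i0; split => // [i nz|i lt_i nz]; rewrite w0; first exact: w_ge_mu.
rewrite ltn_neqAle w_ge_mu // andbT; apply: contraTneq lt_i => mu_eq.
by rewrite -leqNgt i0_min // nz mu_eq eqxx.
Qed.

Lemma coefM_ndvd_split {q : int} {G H : {poly int}} {r : nat} :
  ~~ (q %| (G * H)`_r)%Z ->
  exists2 s, (s <= r)%N & ~~ (q %| G`_s)%Z && ~~ (q %| H`_(r - s)%N)%Z.
Proof.
move=> ndvd; have [s ndvd_s|dvd_all] := pickP (fun s : 'I_r.+1 =>
  ~~ (q %| G`_s)%Z && ~~ (q %| H`_(r - s)%N)%Z); first by exists s; rewrite // -ltnS.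
case/negP: ndvd; rewrite coefM; apply: rpred_sum => s _.
move/negbT: (dvd_all s); rewrite negb_and !negbK => /orP[].
- exact: dvdz_mulr.
- exact: dvdz_mull.
Qed.

Definition logz (p : nat) (x : int) : nat := logn p `|x|.
Arguments logz p x%_R.

Definition newton_weight (p k l : nat) (F : {poly int}) i :=
  (l * logz p F`_i + k * i)%N.

Section NewtonPolygon.

Context {p k l : nat} {G H : {poly int}} {i0 j0 : nat}.
Hypotheses (p_pr : prime p) (l_gt0 : (0 < l)%N).
Local Notation w := (newton_weight p k l).
Hypotheses (G_min : least_argmin (w G) G i0) (H_min : least_argmin (w H) H j0).

Lemma logz_offdiag_gt x :
  (x <= i0 + j0)%N -> x != i0 -> G`_x != 0 -> H`_(i0 + j0 - x)%N != 0 ->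
  (logz p G`_i0 + logz p H`_j0 < logz p G`_x + logz p H`_(i0 + j0 - x)%N)%N.
Proof.
case: G_min H_min => [_ G_le G_lt] [_ H_le H_lt] x_le x_neq Gx_nz Hx_nz.
rewrite -(ltn_pmul2l l_gt0); rewrite /newton_weight in G_le G_lt H_le H_lt.
have k_split : (k * (i0 + j0 - x) + k * x = k * i0 + k * j0)%N.
  by rewrite -mulnDr subnK // mulnDr.
move: x_neq; case: (ltngtP x i0) => // [lt_x|gt_x] _.
- by have := G_lt x lt_x Gx_nz; have := H_le _ Hx_nz; lia.
- have lt_y : (i0 + j0 - x < j0)%N by lia.
  by have := H_lt _ lt_y Hx_nz; have := G_le _ Gx_nz; lia.
Qed.

Lemma coefM_argmin_ndvd :
  ~~ ((p ^ (logz p G`_i0 + logz p H`_j0).+1)%:Z %| (G * H)`_(i0 + j0))%Z.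
Proof.
case: G_min H_min => [G_nz _ _] [H_nz _ _].
have lt_i0 : (i0 < (i0 + j0).+1)%N by rewrite ltnS leq_addr.
rewrite coefM (bigD1 (Ordinal lt_i0)) //= addKn rpredDr.
  rewrite dvdzE abszM /= pfactor_dvdn ?muln_gt0 ?absz_gt0 ?G_nz ?H_nz //.
  by rewrite lognM ?absz_gt0 // ltnn.
apply: rpred_sum => x x_neq.
have [->|Gx_nz] := eqVneq G`_x 0; first by rewrite mul0r rpred0.
have [->|Hx_nz] := eqVneq H`_(i0 + j0 - x)%N 0; first by rewrite mulr0 rpred0.
rewrite dvdzE abszM /= pfactor_dvdn ?muln_gt0 ?absz_gt0 ?Gx_nz ?Hx_nz //.
by rewrite lognM ?absz_gt0 // logz_offdiag_gt // -ltnS.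
Qed.

Lemma newton_weight_lower_bound :
  (forall r, (r < l)%N -> ((p ^ k)%:Z %| (G * H)`_r)%Z) ->
  (k * l <= w G i0 + w H j0)%N.
Proof.
move=> low_dvd; have ndvd := coefM_argmin_ndvd.
have coef_nz : (G * H)`_(i0 + j0) != 0 by apply: contraNneq ndvd => ->; rewrite dvdz0.
have coef_val : (logz p (G * H)`_(i0 + j0) <= logz p G`_i0 + logz p H`_j0)%N.
  by rewrite leqNgt; apply: contra ndvd; rewrite dvdzE /= pfactor_dvdn ?absz_gt0.
rewrite /newton_weight addnACA -mulnDr -mulnDr.
case: (ltnP (i0 + j0) l) => [lt_l|ge_l].
- have := low_dvd _ lt_l; rewrite dvdzE /= pfactor_dvdn ?absz_gt0 // => k_le.
  apply: leq_trans (leq_addr _ _).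
  by rewrite mulnC leq_mul2l (leq_trans k_le coef_val) orbT.
- by apply: leq_trans (leq_addl _ _); rewrite leq_mul2l ge_l orbT.
Qed.

End NewtonPolygon.

Lemma newton_logz_sum_neq {p k l : nat} (G H : {poly int}) :
  prime p -> coprime k l ->
  (forall r, (r < l)%N -> ((p ^ k)%:Z %| (G * H)`_r)%Z) ->
  ~~ (p%:Z %| (G * H)`_l)%Z ->
  (0 < logz p G`_0)%N -> (0 < logz p H`_0)%N ->
  (logz p G`_0 + logz p H`_0 != k)%N.
Proof.
move=> p_pr kl_cop low_dvd ndvd_l G0_val H0_val; apply/eqP => val_sum.
have dvd_of_logz x : (0 < logz p x)%N -> (p%:Z %| x)%Z.
  by rewrite /logz logn_gt0 mem_primes dvdzE => /and3P[_ _].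
have logz_ndvd x : ~~ (p%:Z %| x)%Z -> x != 0 /\ logz p x = 0%N.
  move=> nd; split; first by apply: contraNneq nd => ->; rewrite dvdz0.
  by rewrite /logz logn_coprime // prime_coprime // -dvdzE.
have nz_of_logz x : (0 < logz p x)%N -> x != 0.
  by apply: contraTneq => ->; rewrite /logz logn0.
have [s le_s /andP[Gs_nd Hs_nd]] := coefM_ndvd_split ndvd_l.
have s_gt0 : (0 < s)%N.
  by rewrite lt0n; apply: contraNneq Gs_nd => ->; rewrite dvd_of_logz.
have lt_s : (s < l)%N.
  rewrite ltn_neqAle le_s andbT.
  by apply: contraNneq Hs_nd => ->; rewrite subnn dvd_of_logz.
have [Gs_nz Gs_val] := logz_ndvd _ Gs_nd; have [Hs_nz Hs_val] := logz_ndvd _ Hs_nd.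
have G_nz : G != 0 by apply: contraNneq Gs_nz => ->; rewrite coef0.
have H_nz : H != 0 by apply: contraNneq Hs_nz => ->; rewrite coef0.
have [i0 G_min] := least_argminP (newton_weight p k l G) G_nz.
have [j0 H_min] := least_argminP (newton_weight p k l H) H_nz.
have := newton_weight_lower_bound p_pr (ltn_trans s_gt0 lt_s) G_min H_min low_dvd.
case: G_min H_min => [_ G_le _] [_ H_le _].
have := G_le _ (nz_of_logz _ G0_val); have := G_le _ Gs_nz.
have := H_le _ (nz_of_logz _ H0_val); have := H_le _ Hs_nz.
rewrite /newton_weight Gs_val Hs_val !muln0 !addn0 !add0n.
set WG := (l * _ + k * i0)%N; set WH := (l * _ + k * j0)%N.
move=> WH_le_T WH_le_B WG_le_S WG_le_A bound.
have WG_eq (A B : nat) : (WG <= A)%N -> (WH <= B)%N -> (A + B = k * l)%N -> WG = A.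
  move=> WG_le WH_le AB_eq; apply/eqP; rewrite eqn_leq WG_le -(leq_add2r B) AB_eq.
  by apply: leq_trans bound _; rewrite leq_add2l.
have la_eq : (l * logz p G`_0 = k * s)%N.
  rewrite -(WG_eq _ _ WG_le_A WH_le_B); last by rewrite -mulnDr val_sum mulnC.
  by apply: (WG_eq _ _ WG_le_S WH_le_T); rewrite -mulnDr subnKC // ltnW.
have : (l %| k * s)%N by rewrite -la_eq dvdn_mulr.
rewrite Gauss_dvdr 1?coprime_sym // => /(dvdn_leq s_gt0).
by rewrite leqNgt lt_s.
Qed.

Theorem theorem2 (R : realType) (f : {poly int}) (m : nat) :
  size f = m.+1 ->
  primitive_poly f ->
  forall (alpha beta : R) (j : nat),
    0 < alpha -> alpha < beta -> (j <= m)%N ->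
    `|f`_j|%:~R * alpha ^+ j >
      \sum_(i < m.+1 | i != j :> nat) `|f`_i|%:~R * beta ^+ i ->
  forall (n d k l p : nat),
    (0 < n)%N -> (0 < d)%N -> (0 < k)%N -> (0 < l)%N -> (l <= m)%N ->
    prime p -> ~~ (p %| d)%N ->
    beta - d%:R >= n%:R -> n%:R >= alpha + d%:R ->
    (f.[n%:Z] = (p ^ k * d)%:Z \/ f.[n%:Z] = - (p ^ k * d)%:Z) ->
    coprime k l ->
    (forall i : nat, (i < l)%N -> ((p ^ k)%:Z %| (f^`N(i)).[n%:Z])%Z) ->
    ((1 < k)%N -> ~~ ((p%:Z) %| (f^`N(l)).[n%:Z])%Z) ->
  irreducible_Zpoly f.
Proof.
move=> size_f prim_f alpha beta j alpha_gt0 _ _ dominant n d k l p _ _ _ l_gt0 l_le_m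
  p_pr p_nd beta_ge alpha_le f_n kl_cop low_dvd top_ndvd.
apply: irreducible_Zpoly_primitive => // [|g h fgh size_g size_h].
  by rewrite size_f ltnS (leq_trans l_gt0 l_le_m).
have value_gt u v : f = u * v -> (1 < size u)%N -> (d < `|u.[n%:Z]|)%N.
  move=> fuv size_u; apply: (@factor_horner_gt _ f u v alpha beta j) => //.
    exact: ltW.
  by rewrite size_f.
have f_n_abs : (`|g.[n%:Z]| * `|h.[n%:Z]| = p ^ k * d)%N.
  by rewrite -abszM -hornerM -fgh; case: f_n => ->; rewrite ?abszN.
have [g_val h_val val_sum] := logn_split_above_cofactor p_pr p_nd f_n_abs
  (value_gt _ _ fgh size_g) (value_gt _ _ (etrans fgh (mulrC g h)) size_h).
pose shift := 'X + (n%:Z)%:P.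
have coef_shift r : ((g \Po shift) * (h \Po shift))`_r = f^`N(r).[n%:Z].
  by rewrite -comp_polyM -fgh coef_comp_XaddC.
have const_shift u : (u \Po shift)`_0 = u.[n%:Z] by rewrite coef_comp_XaddC nderivn0.
suff : (logz p (g \Po shift)`_0 + logz p (h \Po shift)`_0 != k)%N.
  by rewrite /logz !const_shift val_sum eqxx.
apply: (newton_logz_sum_neq _ _ p_pr kl_cop).
- by move=> r lt_r; rewrite coef_shift low_dvd.
- by rewrite coef_shift top_ndvd // -val_sum (leq_add g_val h_val).
- by rewrite const_shift.
by rewrite const_shift.
Qed.
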